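(* Let $G$ be an Abelian group and $(\rho,V)$ a linear representation of $G$ on a finite-dimensional vector space $V$ over a field $k$. Let $A$ be a nonempty finite subset of $G$ and $Y\neq\{0\}$ a $k$-subspace of $V$ with $\dim(A\cdot Y)\leq\alpha\dim(Y)$ for some $\alpha\in\mathbb{R}_{\geq0}$. Then there exists a $k$-subspace $Z\neq\{0\}$ of $Y$ such that $\dim(AC\cdot Z)\leq\alpha\dim(C\cdot Z)$ for every finite subset $C$ of $G$.
   Context: $g\cdot v=\rho(g)v$; for $S\subset G$ and a subspace $Z$, $S\cdot Z$ denotes the $k$-span of $\{s\cdot z\mid s\in S,z\in Z\}$; $AC=\{ac\mid a\in A,c\in C\}$. *)

(* abelian group G as an (additive) zmodType, V a finite-dimensional
   k-vector space (vectType), subspaces {vspace V}, finite subsets {fset G}. *)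
From HB Require Import structures.
From mathcomp Require Import all_boot all_order all_algebra.
From mathcomp Require Import finmap.
From mathcomp Require Import reals.
Set Implicit Arguments. Unset Strict Implicit. Unset Printing Implicit Defensive.
Import Order.TTheory GRing.Theory Num.Theory.
Local Open Scope ring_scope.

(* rho is a linear representation of the (additively written) abelian group G on V:
   rho g is a linear endomorphism, rho 0 = id, rho (g+h) = rho g o rho h.
   (Invertibility of each rho g follows.) *)
Definition is_representation (k : fieldType) (G : zmodType) (V : vectType k)
  (rho : G -> 'End(V)) : Prop :=
  rho 0 = \1%VF /\ forall g h : G, rho (g + h) = (rho g \o rho h)%VF.

Definition act_span (k : fieldType) (G : zmodType) (V : vectType k)
  (rho : G -> 'End(V)) (S : {fset G}) (Z : {vspace V}) : {vspace V} :=
  (\sum_(s <- enum_fset S) (rho s @: Z))%VS.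

Definition fset_prod (G : zmodType) (A C : {fset G}) : {fset G} :=
  [fset (a + c)%R | a in A, c in C]%fset.

(* Petridis' argument.  Among the nonzero subspaces Z of Y pick one minimising
   dim (A.Z) / dim Z; this ratio is at most dim (A.Y) / dim Y <= alpha, so it suffices
   to show dim (AC.Z) * dim Z <= dim (A.Z) * dim (C.Z), by induction on C.  Adding x
   to C adds to AC.Z the space x.(A.Z) = A.(x.Z) (G is abelian), which meets AC.Z in
   at least A.(x.Z0), where Z0 = {z in Z | A.(x z) <= AC.Z}.  Minimality bounds
   dim (A.Z0) from below, and x.Z :&: C.Z <= x.Z0 bounds dim Z0 from below by the
   growth dim Z - (dim ((x+C).Z) - dim (C.Z)). *)

From HB Require Import structures.
From mathcomp Require Import all_boot all_order all_algebra.
From mathcomp Require Import finmap.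
From mathcomp Require Import boolp reals.
From mathcomp Require Import zify.
Import Order.TTheory GRing.Theory Num.Theory.
Local Open Scope ring_scope.
Set Implicit Arguments. Unset Strict Implicit. Unset Printing Implicit Defensive.

Lemma exists_minimizer (T : Type) (P : T -> Prop) (mu : T -> nat) :
  (exists x, P x) -> exists2 x, P x & forall y, P y -> (mu x <= mu y)%N.
Proof.
move=> [x0 Px0].
pose Q m := `[< exists2 x, P x & mu x = m >].
have exQ : exists m, Q m by exists (mu x0); apply/asboolP; exists x0.
case: (ex_minnP exQ) => m /asboolP [x Px <-] min_m.
by exists x => // y Py; apply: min_m; apply/asboolP; exists y.
Qed.

Lemma exists_min_ratio (T : Type) (P : T -> Prop) (f g : T -> nat) (n : nat) :
  (exists x, P x) -> (forall x, P x -> (0 < g x <= n)%N) ->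
  exists2 x, P x & forall y, P y -> (f x * g y <= f y * g x)%N.
Proof.
move=> exP g_bound; pose mu x := (f x * n`! %/ g x)%N.
(* Every g x divides n`!, so [mu] is the ratio f / g scaled to an integer. *)
have muK x : P x -> (mu x * g x = f x * n`!)%N.
  by move=> /g_bound /andP[g_gt0 g_le]; rewrite divnK // dvdn_mull // dvdn_fact ?g_gt0.
have [x Px min_x] := exists_minimizer mu exP.
exists x => // y Py; rewrite -(leq_pmul2r (fact_gt0 n)).
rewrite mulnAC -(muK x Px) [leqRHS]mulnAC -(muK y Py) -!mulnA [(g x * _)%N]mulnC.
by rewrite leq_mul2r min_x ?orbT.
Qed.

Section LinearPreimage.
Variables (k : fieldType) (V : vectType k).
Implicit Types (f : 'End(V)) (U X : {vspace V}).

Lemma subv_lpreim f U X : (U <= f @^-1: X)%VS = (f @: U <= X)%VS.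
Proof.
apply/subvP/subvP => [sUX _ /memv_imgP[u Uu ->] | sfUX u Uu].
  by rewrite memv_preim sUX.
by rewrite -memv_preim sfUX ?memv_img.
Qed.

Lemma limg_capv_lpreim f U X : (f @: (U :&: f @^-1: X))%VS = (f @: U :&: X)%VS.
Proof.
apply/eqP; rewrite eqEsubv subv_cap limgS ?capvSl //= -subv_lpreim capvSr /=.
apply/subvP => _ /memv_capP[/memv_imgP[u Uu ->] fuX].
by rewrite memv_img // memv_cap Uu -memv_preim.
Qed.

End LinearPreimage.

Section ActSpan.
Variables (k : fieldType) (G : zmodType) (V : vectType k) (rho : G -> 'End(V)).
Implicit Types (S : {fset G}) (U W : {vspace V}).

Definition act_preim S W : {vspace V} :=
  (\bigcap_(s <- enum_fset S) (rho s @^-1: W))%VS.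

Lemma act_span_subP S U W :
  reflect (forall s, s \in S -> (rho s @: U <= W)%VS) (act_span rho S U <= W)%VS.
Proof.
apply: (iffP idP) => [sSUW s Ss | sUW].
  by apply: subv_trans sSUW; rewrite /act_span (big_rem s) ?addvSl.
rewrite /act_span big_seq; elim/big_ind: _ => [|U1 U2|s]; last exact: sUW.
  exact: sub0v.
by rewrite subv_add => -> ->.
Qed.

Lemma act_span_sup {S s} U : s \in S -> (rho s @: U <= act_span rho S U)%VS.
Proof. by move: s; apply/act_span_subP. Qed.

Lemma act_spanS S U1 U2 : (U1 <= U2)%VS -> (act_span rho S U1 <= act_span rho S U2)%VS.
Proof.
move=> sU12; apply/act_span_subP => s Ss.
exact: subv_trans (limgS _ sU12) (act_span_sup _ Ss).
Qed.

Lemma act_span_fset0 U : act_span rho fset0 U = 0%VS.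
Proof. by rewrite /act_span big_seq_fset0. Qed.

Lemma act_span0 S : act_span rho S 0 = 0%VS.
Proof. by rewrite /act_span big1 // => s _; rewrite limg0. Qed.

Lemma act_span_fset1U x S U :
  act_span rho (x |` S)%fset U = (rho x @: U + act_span rho S U)%VS.
Proof.
apply/eqP; rewrite eqEsubv; apply/andP; split.
  apply/act_span_subP => s; rewrite !inE => /orP[/eqP-> | Ss].
    exact: addvSl.
  exact: subv_trans (act_span_sup _ Ss) (addvSr _ _).
rewrite subv_add act_span_sup ?fset1U1 //=.
by apply/act_span_subP => s Ss; rewrite act_span_sup // fset1Ur.
Qed.

Lemma act_spanD S U1 U2 :
  act_span rho S (U1 + U2) = (act_span rho S U1 + act_span rho S U2)%VS.
Proof. by rewrite /act_span -big_split; apply: eq_bigr => s _; rewrite limgD. Qed.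

Lemma act_span_sub_preim S U W :
  (act_span rho S U <= W)%VS = (U <= act_preim S W)%VS.
Proof.
apply/act_span_subP/idP => [sUW | sUW s Ss].
  rewrite /act_preim big_seq; elim/big_ind: _ => [|U1 U2|s Ss]; first exact: subvf.
    by rewrite subv_cap => -> ->.
  by rewrite subv_lpreim sUW.
by rewrite -subv_lpreim (subv_trans sUW) // /act_preim (big_rem s) ?capvSl.
Qed.

Hypothesis rho_rep : is_representation rho.

Lemma dim_limg_rep g U : \dim (rho g @: U) = \dim U.
Proof.
have [rho0 rhoD] := rho_rep.
have rhoNK : (rho (- g) @: (rho g @: U))%VS = U.
  by rewrite -limg_comp -rhoD addNr rho0 lim1g.
have dim_limg_le f (X : {vspace V}) : (\dim (f @: X) <= \dim X)%N.
  by rewrite -(limg_ker_dim f X) leq_addl.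
by apply/eqP; rewrite eqn_leq dim_limg_le -{1}rhoNK dim_limg_le.
Qed.

Lemma limg_act_span g S U :
  (rho g @: act_span rho S U)%VS = act_span rho S (rho g @: U).
Proof.
have [_ rhoD] := rho_rep.
by rewrite /act_span limg_sum; apply: eq_bigr => s _; rewrite -!limg_comp -!rhoD addrC.
Qed.

Lemma act_span_fset_prod A C U :
  act_span rho (fset_prod A C) U = act_span rho A (act_span rho C U).
Proof.
have [_ rhoD] := rho_rep.
apply/eqP; rewrite eqEsubv; apply/andP; split.
  apply/act_span_subP => _ /imfset2P[a Aa [c Cc ->]].
  rewrite rhoD limg_comp; apply: subv_trans (act_span_sup _ Aa).
  exact/limgS/act_span_sup.
apply/act_span_subP => a Aa; rewrite limg_act_span.
apply/act_span_subP => c Cc; rewrite -limg_comp -rhoD.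
by apply: act_span_sup; rewrite addrC /fset_prod; apply: in_imfset2.
Qed.

End ActSpan.

Section PetridisInduction.
Variables (k : fieldType) (G : zmodType) (V : vectType k) (rho : G -> 'End(V)).
Hypothesis rho_rep : is_representation rho.
Variables (A : {fset G}) (Z : {vspace V}).

Let W C := act_span rho (fset_prod A C) Z.
Let Z0 x C := (Z :&: rho x @^-1: act_preim rho A (W C))%VS.

Lemma dim_act_span_fset_prod_fset1U x C :
  (\dim (W (x |` C)%fset) + \dim (act_span rho A (Z0 x C))
    <= \dim (W C) + \dim (act_span rho A Z))%N.
Proof.
set B := act_span rho A (rho x @: Z).
have sAxZ0 : (act_span rho A (rho x @: Z0 x C) <= B :&: W C)%VS.
  rewrite subv_cap andbC act_span_sub_preim -subv_lpreim capvSr /=.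
  by rewrite act_spanS // limgS // capvSl.
rewrite /W act_span_fset_prod // act_span_fset1U act_spanD -act_span_fset_prod // -/(W C) -/B.
rewrite -(dim_limg_rep rho_rep x (act_span rho A Z)).
rewrite -(dim_limg_rep rho_rep x (act_span rho A (Z0 x C))) !limg_act_span // -/B.
by rewrite [leqRHS]addnC -[leqRHS]dimv_sum_cap leq_add2l dimvS.
Qed.

Lemma dim_act_span_fset1U x C :
  (\dim (act_span rho C Z) + \dim Z <= \dim (act_span rho (x |` C)%fset Z) + \dim (Z0 x C))%N.
Proof.
rewrite act_span_fset1U addnC -(dim_limg_rep rho_rep x Z) -(dim_limg_rep rho_rep x (Z0 x C)).
rewrite -dimv_sum_cap leq_add2l dimvS // limg_capv_lpreim capvS //.
by rewrite -act_span_sub_preim /W act_span_fset_prod.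
Qed.

Hypothesis Z_min : forall U, (U <= Z)%VS ->
  (\dim (act_span rho A Z) * \dim U <= \dim (act_span rho A U) * \dim Z)%N.

Lemma dim_act_span_fset_prod_le C :
  (\dim (act_span rho (fset_prod A C) Z) * \dim Z
    <= \dim (act_span rho A Z) * \dim (act_span rho C Z))%N.
Proof.
elim/fset1U_rect: C => [|x C _ IH].
  by rewrite act_span_fset_prod // act_span_fset0 act_span0 dimv0.
have := dim_act_span_fset_prod_fset1U x C; have := dim_act_span_fset1U x C.
have := Z_min (capvSl Z (rho x @^-1: act_preim rho A (W C))).
(* Writing w, a, c, d, a0, z0 for the dimensions of W C, A.Z, C.Z, Z, A.Z0, Z0:
   w' d <= (w + a - a0) d <= a c + a d - a z0 <= a c'. *)
rewrite /Z0 /W in IH *.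
nia.
Qed.

End PetridisInduction.

Lemma exists_min_act_span_ratio (k : fieldType) (G : zmodType) (V : vectType k)
    (rho : G -> 'End(V)) (A : {fset G}) (Y : {vspace V}) :
  Y != 0%VS ->
  exists Z : {vspace V}, [/\ Z != 0%VS, (Z <= Y)%VS &
    forall U, (U <= Y)%VS ->
      (\dim (act_span rho A Z) * \dim U <= \dim (act_span rho A U) * \dim Z)%N].
Proof.
move=> Y_neq0.
have dim_bound U : U != 0%VS /\ (U <= Y)%VS -> (0 < \dim U <= \dim {:V})%N.
  by move=> [U_neq0 _]; rewrite lt0n dimv_eq0 U_neq0 dimvS ?subvf.
have [Z [Z_neq0 sZY] Z_min] := exists_min_ratio (fun U => \dim (act_span rho A U))
  (ex_intro _ Y (conj Y_neq0 (subvv Y))) dim_bound.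
exists Z; split=> // U sUY; have [->|U_neq0] := eqVneq U 0%VS.
  by rewrite dimv0 muln0.
exact: Z_min.
Qed.

Unset Implicit Arguments.

Theorem mainTheorem18 (R : realType) (k : fieldType) (G : zmodType) (V : vectType k)
  (rho : G -> 'End(V)) (A : {fset G}) (Y : {vspace V}) (alpha : R) :
  is_representation rho ->
  A != fset0 ->
  Y != 0%VS ->
  0 <= alpha ->
  ((\dim (act_span rho A Y))%:R <= alpha * (\dim Y)%:R) ->
  exists Z : {vspace V},
    [/\ Z != 0%VS, (Z <= Y)%VS &
      forall C : {fset G},
        (\dim (act_span rho (fset_prod A C) Z))%:R
          <= alpha * (\dim (act_span rho C Z))%:R].
Proof.
move=> rho_rep _ Y_neq0 _ AY_le.
have [Z [Z_neq0 sZY Z_min]] := exists_min_act_span_ratio rho A Y_neq0.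
exists Z; split=> // C.
have := dim_act_span_fset_prod_le rho_rep (fun U sUZ => Z_min U (subv_trans sUZ sZY)) C.
have := Z_min Y (subvv Y).
have Z_gt0 : 0 < (\dim Z)%:R :> R by rewrite ltr0n lt0n dimv_eq0.
have Y_gt0 : 0 < (\dim Y)%:R :> R by rewrite ltr0n lt0n dimv_eq0.
rewrite -!(ler_nat R) !natrM => AZ_ratio AC_ratio.
have AZ_le : (\dim (act_span rho A Z))%:R <= alpha * (\dim Z)%:R.
  by rewrite -(ler_pM2r Y_gt0) (le_trans AZ_ratio) // mulrAC ler_wpM2r.
by rewrite -(ler_pM2r Z_gt0) (le_trans AC_ratio) // mulrAC ler_wpM2r.
Qed.
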